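(* Let ${\sf SComp}$ be the non-symmetric suboperad of ${\sf T}\mathbb{N}_3$ generated by $00$, $01$ and $02$. Then the elements of ${\sf SComp}$ are exactly the words over the alphabet $\{0,1,2\}$ that begin with $0$. Moreover, the elements of ${\sf SComp}$ of arity $n$ are in bijection with the segmented compositions of the integer $n$. Finally, ${\sf SComp}$ is isomorphic to the non-symmetric operad generated by three generators ${\tt a},{\tt b},{\tt c}$ of arity two subject to the nine relations $${\tt a}\circ_1{\tt a}={\tt a}\circ_2{\tt a},\quad {\tt b}\circ_1{\tt a}={\tt a}\circ_2{\tt b},\quad {\tt b}\circ_1{\tt b}={\tt b}\circ_2{\tt a},$$ $${\tt c}\circ_1{\tt a}={\tt a}\circ_2{\tt c},\quad {\tt c}\circ_1{\tt c}={\tt c}\circ_2{\tt a},\quad {\tt b}\circ_1{\tt c}={\tt c}\circ_2{\tt c},$$ $${\tt c}\circ_1{\tt b}={\tt b}\circ_2{\tt b},\quad {\tt a}\circ_1{\tt b}={\tt b}\circ_2{\tt c},\quad {\tt a}\circ_1{\tt c}={\tt c}\circ_2{\tt b}.$$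
   Context: Let $\mathbb{N}_3=\mathbb{Z}/3\mathbb{Z}=\{0,1,2\}$ be the additive monoid of integers modulo $3$. ${\sf T}\mathbb{N}_3=\biguplus_{n\ge1}\mathbb{N}_3^n$, elements of arity $n$ being words $x=(x_1,\dots,x_n)$ of length $n$ over $\{0,1,2\}$ (written without separators, e.g. $02=(0,2)$), with partial compositions $x\circ_i y:=(x_1,\dots,x_{i-1},x_i+y_1,\dots,x_i+y_m,x_{i+1},\dots,x_n)$ (sums modulo $3$) for $x$ of arity $n$, $y$ of arity $m$, $1\le i\le n$; it is a non-symmetric set-operad with unit $(0)$. The non-symmetric suboperad generated by a set $S$ is the smallest subset containing $S$ and the unit $(0)$ and closed under all $\circ_i$. A segmented composition of $n$ is a finite nonempty sequence of compositions (finite sequences of positive integers) whose total sum of parts is $n$; equivalently, a row of $n$ cells where each of the $n-1$ gaps between consecutive cells is either empty, a part separator, or a segment separator. A non-symmetric operad generated by generators subject to relations means the quotient of the free non-symmetric set-operad on those generators by the smallest operad congruence containing the given relations. *)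

From mathcomp Require Import all_boot all_algebra.
Set Implicit Arguments. Unset Strict Implicit. Unset Printing Implicit Defensive.
Import GRing.Theory.
Local Open Scope ring_scope.

(* Elements: nonempty words over Z/3Z; arity = size. *)
Definition word := seq 'Z_3.

(* Partial composition x o_i y, for 1 <= i <= size x (1-indexed as in the paper). *)
Definition pcomp (x : word) (i : nat) (y : word) : word :=
  take i.-1 x ++ map (fun a => nth 0 x i.-1 + a) y ++ drop i x.

Definition unitw : word := [:: 0].

Inductive gen_subop (S : word -> Prop) : word -> Prop :=
| gs_gen x : S x -> gen_subop S x
| gs_unit : gen_subop S unitw
| gs_comp x y i : gen_subop S x -> gen_subop S y ->
    (1 <= i <= size x)%N -> gen_subop S (pcomp x i y).

Definition SComp_gens (x : word) : Prop :=
  x = [:: 0; 0] \/ x = [:: 0; 1] \/ x = [:: 0; 2%:R].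

Definition SComp : word -> Prop := gen_subop SComp_gens.

Definition composition (c : seq nat) : bool :=
  (c != [::]) && all (fun k => 0 < k)%N c.

Definition segmented_composition (n : nat) (s : seq (seq nat)) : bool :=
  (s != [::]) && all composition s && (sumn (map sumn s) == n).

Inductive gen3 := ga | gb | gc.

Inductive tree :=
| Leaf : tree
| Node : gen3 -> tree -> tree -> tree.

Fixpoint arity (t : tree) : nat :=
  match t with
  | Leaf => 1
  | Node _ l r => arity l + arity r
  end%N.

(* grafting s on the k-th leaf (0-indexed) of t *)
Fixpoint graft0 (t : tree) (k : nat) (s : tree) : tree :=
  match t with
  | Leaf => if k == 0%N then s else Leaf
  | Node g l r =>
      if (k < arity l)%N then Node g (graft0 l k s) r
      else Node g l (graft0 r (k - arity l) s)
  end.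

Definition tcomp (t : tree) (i : nat) (s : tree) : tree := graft0 t i.-1 s.

Definition bin (g : gen3) : tree := Node g Leaf Leaf.
Definition c1 (g h : gen3) : tree := tcomp (bin g) 1 (bin h).
Definition c2 (g h : gen3) : tree := tcomp (bin g) 2 (bin h).

Inductive srel : tree -> tree -> Prop :=
| r1 : srel (c1 ga ga) (c2 ga ga)
| r2 : srel (c1 gb ga) (c2 ga gb)
| r3 : srel (c1 gb gb) (c2 gb ga)
| r4 : srel (c1 gc ga) (c2 ga gc)
| r5 : srel (c1 gc gc) (c2 gc ga)
| r6 : srel (c1 gb gc) (c2 gc gc)
| r7 : srel (c1 gc gb) (c2 gb gb)
| r8 : srel (c1 ga gb) (c2 gb gc)
| r9 : srel (c1 ga gc) (c2 gc gb).

Inductive scong : tree -> tree -> Prop :=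
| sc_rel t u : srel t u -> scong t u
| sc_refl t : scong t t
| sc_sym t u : scong t u -> scong u t
| sc_trans t u v : scong t u -> scong u v -> scong t v
| sc_compl t t' i s : scong t t' -> (1 <= i <= arity t)%N ->
    scong (tcomp t i s) (tcomp t' i s)
| sc_compr t i s s' : scong s s' -> (1 <= i <= arity t)%N ->
    scong (tcomp t i s) (tcomp t i s').

(* An isomorphism from the quotient operad tree/scong onto SComp, presented as a
   map phi from the free operad that is an operad morphism (unit, compositions,
   arity), whose kernel is exactly scong and whose image is exactly SComp. *)
Definition presents_SComp (phi : tree -> word) : Prop :=
  [/\ phi Leaf = unitw,
      (forall t i s, (1 <= i <= arity t)%N ->
         phi (tcomp t i s) = pcomp (phi t) i (phi s)),
      (forall t, size (phi t) = arity t),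
      (forall t u, phi t = phi u <-> scong t u)
    & (forall x, SComp x <-> exists t, phi t = x)].

From Pilot Require Import Defs.
From mathcomp Require Import all_boot all_algebra zify.
From Stdlib Require Import ProofIrrelevance.
Set Implicit Arguments. Unset Strict Implicit. Unset Printing Implicit Defensive.
Import GRing.Theory.
Local Open Scope ring_scope.

(* Composing into a word x adds the letter of x at the grafting position to
   the inserted word, so the leading 0 of the generators propagates; conversely
   0 :: a :: w = 0a o_2 (0 :: (w - a)), so every word starting with 0 is reached.
   The n - 1 letters after the leading 0 describe the gaps of a row of n cells:
   0 is no separator, 1 a part separator, 2 a segment separator.
   For the presentation, send a, b, c to 00, 01, 02.  The nine relations say
   exactly x o_2 y = (x + y) o_1 x (letters added mod 3), so every tree is
   congruent to a left comb, and the word of a left comb lists the letters of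
   its generators; hence two trees with the same word are congruent. *)

Lemma Z3_cases (a : 'Z_3) : [\/ a = 0, a = 1 | a = 2%:R].
Proof.
by case: a => -[|[|[|m]]] // Hm; [constructor 1|constructor 2|constructor 3]; apply/val_inj.
Qed.

Lemma SComp_head0 x : SComp x -> exists w, x = 0 :: w.
Proof.
elim => {x} [x [->|[->|->]]| |x y [|[|i]] _ [w ->] _ [v ->] //= _].
- by exists [:: 0].
- by exists [:: 1].
- by exists [:: 2%:R].
- by exists [::].
- by rewrite /Defs.pcomp /= add0r; eexists.
- by rewrite /Defs.pcomp /=; eexists.
Qed.

Lemma SComp_cons0 w : SComp (0 :: w).
Proof.
have [n] := ubnP (size w); elim: n w => [|n IHn] [|a w] //= w_lt; first exact: gs_unit.
have -> : 0 :: a :: w = Defs.pcomp [:: 0; a] 2 (0 :: map (fun b => b - a) w).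
  by rewrite /Defs.pcomp /= addr0 cats0 -map_comp map_id_in // => b _; rewrite /= addrC subrK.
apply: gs_comp => //; last by apply: IHn; rewrite size_map.
by apply: gs_gen; rewrite /SComp_gens; case: (Z3_cases a) => ->; auto.
Qed.

Lemma SCompP x : SComp x <-> exists w, x = 0 :: w.
Proof. by split=> [/SComp_head0 | [w ->]]; last exact: SComp_cons0. Qed.

(* The gap letters are read from right to left: the last gap closes the
   rightmost cell, so the cells accumulate on the head of the current part. *)
Fixpoint segcomp_of_gaps (w : seq 'Z_3) : seq (seq nat) :=
  match w with
  | [::] => [:: [:: 1%N]]
  | a :: w' =>
    let s := segcomp_of_gaps w' in
    match val a with
    | 0%N => if s is (k :: c) :: s' then (k.+1 :: c) :: s' else s
    | 1%N => if s is c :: s' then (1%N :: c) :: s' else s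
    | _ => [:: 1%N] :: s
    end
  end.

Fixpoint gaps_of_comp (c : seq nat) : seq 'Z_3 :=
  match c with
  | [::] => [::]
  | [:: k] => nseq k.-1 0
  | k :: c' => nseq k.-1 0 ++ 1 :: gaps_of_comp c'
  end.

Fixpoint gaps_of_segcomp (s : seq (seq nat)) : seq 'Z_3 :=
  match s with
  | [::] => [::]
  | [:: c] => gaps_of_comp c
  | c :: s' => gaps_of_comp c ++ 2%:R :: gaps_of_segcomp s'
  end.

Lemma segcomp_of_gaps_shape w : exists k c s, segcomp_of_gaps w = (k.+1 :: c) :: s.
Proof.
elim: w => [|a w [k [c [s IH]]]] /=; first by exists 0%N, [::], [::].
rewrite IH; case: (val a) => [|[|m]].
- by exists k.+1, c, s.
- by exists 0%N, (k.+1 :: c), s.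
- by exists 0%N, [::], ((k.+1 :: c) :: s).
Qed.

Lemma segcomp_of_gapsP w : segmented_composition (size w).+1 (segcomp_of_gaps w).
Proof.
elim: w => [|a w] //=; have [k [c [s ->]]] := segcomp_of_gaps_shape w.
rewrite /segmented_composition /= => /andP[/andP[Hc Hs] /eqP Hsum].
rewrite /composition /= in Hc *.
by case: (val a) => [|[|m]] /=; rewrite Hc Hs; apply/eqP; lia.
Qed.

Lemma segcomp_of_gaps_nseq0 m u k c s : segcomp_of_gaps u = (k :: c) :: s ->
  segcomp_of_gaps (nseq m 0 ++ u) = ((k + m)%N :: c) :: s.
Proof. by move=> Eu; elim: m => [|m IH] /=; rewrite ?addn0 ?IH ?addnS. Qed.

Lemma segcomp_of_gaps_comp k c u s : all (fun k => 0 < k)%N (k :: c) ->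
  segcomp_of_gaps u = [:: 1%N] :: s ->
  segcomp_of_gaps (gaps_of_comp (k :: c) ++ u) = (k :: c) :: s.
Proof.
move=> + Eu; elim: c k => [|k' c IH] k /=.
  by rewrite andbT => k_gt0; rewrite (segcomp_of_gaps_nseq0 _ Eu) add1n prednK.
case/andP=> k_gt0 /IH {}IH; rewrite -catA cat_cons.
have E1u : segcomp_of_gaps (1 :: gaps_of_comp (k' :: c) ++ u) = (1%N :: k' :: c) :: s.
  by rewrite /= IH.
by rewrite (segcomp_of_gaps_nseq0 _ E1u) add1n prednK.
Qed.

Lemma gaps_of_segcompK s : s != [::] -> all composition s ->
  segcomp_of_gaps (gaps_of_segcomp s) = s.
Proof.
elim: s => [|[|k c] s IH] // _ /andP[/andP[_ Hc] Hs].
case: s IH Hs => [|c' s] IH Hs.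
  by have := segcomp_of_gaps_comp (u := [::]) (s := [::]) Hc erefl; rewrite cats0.
change (segcomp_of_gaps (gaps_of_comp (k :: c) ++ 2%:R :: gaps_of_segcomp (c' :: s))
        = [:: k :: c, c' & s]).
by rewrite (segcomp_of_gaps_comp (s := c' :: s)) //= IH.
Qed.

Lemma gaps_of_segcomp_part0 k c s :
  gaps_of_segcomp ((k.+2 :: c) :: s) = 0 :: gaps_of_segcomp ((k.+1 :: c) :: s).
Proof. by case: c => [|? ?]; case: s. Qed.

Lemma gaps_of_segcomp_part1 k c s :
  gaps_of_segcomp ((1%N :: k.+1 :: c) :: s) = 1 :: gaps_of_segcomp ((k.+1 :: c) :: s).
Proof. by case: c => [|? ?]; case: s. Qed.

Lemma segcomp_of_gapsK : cancel segcomp_of_gaps gaps_of_segcomp.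
Proof.
elim=> [|a w] //=; have [k [c [s ->]]] := segcomp_of_gaps_shape w => IH.
case: (Z3_cases a) => ->.
- by rewrite [LHS]gaps_of_segcomp_part0 IH.
- by rewrite [LHS]gaps_of_segcomp_part1 IH.
- by rewrite -[in RHS]IH.
Qed.

Lemma SComp_segcomp_bij n :
  exists f : {x : word | SComp x /\ size x = n} ->
             {s : seq (seq nat) | segmented_composition n s}, bijective f.
Proof.
have segcompP (x : {x : word | SComp x /\ size x = n}) :
    segmented_composition n (segcomp_of_gaps (behead (sval x))).
  by case: x => x /= [/SComp_head0 [w ->] <-]; exact: segcomp_of_gapsP.
have wordP (s : {s | segmented_composition n s}) :
    SComp (0 :: gaps_of_segcomp (val s)) /\ size (0 :: gaps_of_segcomp (val s)) = n.
  case: s => s /= /andP[/andP[s_neq0 Hs] /eqP <-]; split; first exact: SComp_cons0.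
  by have := segcomp_of_gapsP (gaps_of_segcomp s); rewrite gaps_of_segcompK // => /andP[_ /eqP ->].
exists (fun x => exist (segmented_composition n) _ (segcompP x)).
exists (fun s => exist (fun x => SComp x /\ size x = n) _ (wordP s)).
- case=> x [Hx Hn]; apply: eq_sig_hprop => [? ? ?|/=]; first exact: proof_irrelevance.
  by have [w Ex] := SComp_head0 Hx; rewrite {2}Ex Ex /= segcomp_of_gapsK.
- case=> s Hs; apply: val_inj => /=.
  by case/andP: Hs => /andP[s_neq0 Hs] _; rewrite gaps_of_segcompK.
Qed.

Definition letter (g : gen3) : 'Z_3 := match g with ga => 0 | gb => 1 | gc => 2%:R end.

Definition gen_of_letter (z : 'Z_3) : gen3 :=
  match val z with 0%N => ga | 1%N => gb | _ => gc end.

Lemma gen_of_letterK : cancel gen_of_letter letter.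
Proof. by move=> z; case: (Z3_cases z) => ->. Qed.

Lemma letter_inj : injective letter.
Proof. by case; case => // /(congr1 val). Qed.

Fixpoint tree_word (t : tree) : word :=
  match t with
  | Leaf => unitw
  | Node g l r => tree_word l ++ map (fun a => a + letter g) (tree_word r)
  end.

Lemma size_tree_word t : size (tree_word t) = arity t.
Proof. by elim: t => //= g l IHl r IHr; rewrite size_cat size_map IHl IHr. Qed.

Lemma tree_word_head0 t : exists w, tree_word t = 0 :: w.
Proof. by elim: t => [|g l [w Ew] r _] /=; rewrite ?Ew; eexists. Qed.

Lemma pcomp_catl (x y z : word) k : (k < size x)%N ->
  Defs.pcomp (x ++ y) k.+1 z = Defs.pcomp x k.+1 z ++ y.
Proof.
move=> k_lt; rewrite /Defs.pcomp /= take_cat nth_cat drop_cat k_lt -!catA.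
case: ltnP => // x_le; have -> : k.+1 = size x by apply/eqP; rewrite eqn_leq k_lt x_le.
by rewrite subnn drop0 drop_size.
Qed.

Lemma pcomp_catr (x y z : word) k : (size x <= k)%N ->
  Defs.pcomp (x ++ y) k.+1 z = x ++ Defs.pcomp y (k - size x).+1 z.
Proof.
move=> x_le; rewrite /Defs.pcomp /= take_cat nth_cat drop_cat.
by rewrite !ltnNge x_le (leq_trans x_le (leqnSn k)) /= -!catA subSn.
Qed.

Lemma map_addr_pcomp (x z : word) (a : 'Z_3) k : (k < size x)%N ->
  map (fun b => b + a) (Defs.pcomp x k.+1 z) = Defs.pcomp (map (fun b => b + a) x) k.+1 z.
Proof.
move=> k_lt; rewrite /Defs.pcomp /= !map_cat map_take map_drop -map_comp (nth_map 0) //.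
by congr (_ ++ _ ++ _); apply: eq_map => b /=; rewrite addrAC.
Qed.

Lemma tree_word_graft t k s : (k < arity t)%N ->
  tree_word (graft0 t k s) = Defs.pcomp (tree_word t) k.+1 (tree_word s).
Proof.
elim: t k => [[|k] //= _|g l IHl r IHr k /= k_lt].
  by rewrite /Defs.pcomp /= cats0 map_id_in // => b _; rewrite add0r.
have [k_lt_l | l_le_k] := ltnP k (arity l).
  by rewrite /= IHl // pcomp_catl ?size_tree_word.
rewrite /= pcomp_catr ?size_tree_word // IHr; last by move: k_lt; lia.
by rewrite map_addr_pcomp // size_tree_word; move: k_lt; lia.
Qed.

Lemma tree_word_tcomp t i s : (1 <= i <= arity t)%N ->
  tree_word (tcomp t i s) = Defs.pcomp (tree_word t) i (tree_word s).
Proof. by case: i => // i /andP[_]; exact: tree_word_graft. Qed.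

Lemma scong_tree_word t u : scong t u -> tree_word t = tree_word u.
Proof.
elim=> {t u} // [t u | t u v _ -> _ -> // | t t' i s _ Et i_le | t i s s' _ Es i_le].
- by case; apply/eqP.
- have i_le' : (1 <= i <= arity t')%N by rewrite -(size_tree_word t') -Et size_tree_word.
  by rewrite !tree_word_tcomp ?Et.
- by rewrite !tree_word_tcomp ?Es.
Qed.

Definition gen_add (x y : gen3) : gen3 := gen_of_letter (letter x + letter y).

Lemma scong_c2_c1 x y : scong (c2 x y) (c1 (gen_add x y) x).
Proof. by case: x; case: y; apply: sc_sym; apply: sc_rel; constructor. Qed.

Lemma scong_rotate x y l m r :
  scong (Node x l (Node y m r)) (Node (gen_add x y) (Node x l m) r).
Proof.
(* Both sides are ((_ o_3 r) o_2 m) o_1 l; the arity side conditions compute. *)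
have Er := @sc_compl _ _ 3 r (scong_c2_c1 x y) isT.
exact: (@sc_compl _ _ 1 l (@sc_compl _ _ 2 m Er isT) isT).
Qed.

Lemma scong_nodel g l l' r : scong l l' -> scong (Node g l r) (Node g l' r).
Proof. by move=> El; exact: (@sc_compr (Node g Leaf r) 1 l l' El). Qed.

Lemma scong_noder g l r r' : scong r r' -> scong (Node g l r) (Node g l r').
Proof.
move=> Er; have graft_last s : tcomp (Node g l Leaf) (arity l).+1 s = Node g l s.
  by rewrite /tcomp /= ltnn subnn.
rewrite -[Node g l r]graft_last -[Node g l r']graft_last.
by apply: sc_compr Er _; rewrite /= addn1 ltnS leqnn.
Qed.

Fixpoint left_comb (q : seq gen3) : tree :=
  if q is g :: q' then Node g (left_comb q') Leaf else Leaf.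

Lemma tree_word_left_comb q : tree_word (left_comb q) = 0 :: rev (map letter q).
Proof. by elim: q => [|g q IH] //=; rewrite IH /= add0r rev_cons -cats1. Qed.

Lemma scong_node_left_comb g p q :
  exists p', scong (Node g (left_comb p) (left_comb q)) (left_comb p').
Proof.
elim: q g p => [|h q IH] g p /=; first by exists (g :: p); apply: sc_refl.
have [p' Ep'] := IH g p; exists (gen_add g h :: p').
by apply: sc_trans (scong_rotate _ _ _ _ _) (scong_nodel _ _ Ep').
Qed.

Lemma scong_left_comb t : exists p, scong t (left_comb p).
Proof.
elim: t => [|g l [p El] r [q Er]]; first by exists [::]; apply: sc_refl.
have [p' E] := scong_node_left_comb g p q; exists p'.
exact: sc_trans (scong_noder _ _ Er) (sc_trans (scong_nodel _ _ El) E).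
Qed.

Lemma tree_word_eq t u : tree_word t = tree_word u <-> scong t u.
Proof.
split=> [Etu|]; last exact: scong_tree_word.
have [p Ep] := scong_left_comb t; have [q Eq] := scong_left_comb u.
have : tree_word (left_comb p) = tree_word (left_comb q).
  by rewrite -(scong_tree_word Ep) -(scong_tree_word Eq).
rewrite !tree_word_left_comb => -[/(congr1 rev)]; rewrite !revK => /(inj_map letter_inj) Epq.
by apply: sc_trans Ep _; rewrite Epq; apply: sc_sym.
Qed.

Lemma tree_word_image x : SComp x <-> exists t, tree_word t = x.
Proof.
rewrite SCompP; split=> [[w ->]|[t <-]]; last exact: tree_word_head0.
exists (left_comb (rev (map gen_of_letter w))).
by rewrite tree_word_left_comb map_rev revK -map_comp map_id_in // => z _ /=; rewrite gen_of_letterK.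
Qed.

Theorem mainTheorem8 :
  (forall x : word, SComp x <-> (exists w, x = 0 :: w))
  /\ (forall n : nat,
        exists f : {x : word | SComp x /\ size x = n} ->
                   {s : seq (seq nat) | segmented_composition n s},
          bijective f)
  /\ (exists phi : tree -> word, presents_SComp phi).
Proof.
split; first exact: SCompP.
split; first exact: SComp_segcomp_bij.
exists tree_word; split.
- by [].
- exact: tree_word_tcomp.
- exact: size_tree_word.
- exact: tree_word_eq.
- exact: tree_word_image.
Qed.
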